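(* Let $\gamma>0$ and $s>0$, let $G(u,v;s)=(u^2+v^2)^{-s}$ and $D_1=\partial/\partial u$. Define polynomials $P_j(u,v;s)$ by $P_1(u,v;s)=-2su$ and $P_{j+1}(u,v;s)=(u^2+v^2)\,\partial_uP_j(u,v;s)-2(s+j)uP_j(u,v;s)$. Then for $u\ge\gamma$, $v\in\mathbb R$ and $j\ge1$, $$\frac{D_1^jG(u,v;s)}{G(u,v;s)}=\frac{P_j(u,v;s)}{(u^2+v^2)^j},$$ and the following estimates hold for all $u\ge\gamma$, $v\in\mathbb R$: $$-\frac{2s}{\gamma}\le\frac{D_1G}{G}<0,\qquad -\frac{s}{4\gamma^2(s+1)}\le\frac{D_1^2G}{G}\le\frac{2s(2s+1)}{\gamma^2},$$ $$-\frac{2s(2s+1)(2s+2)}{\gamma^3}\le\frac{D_1^3G}{G}\le\frac{2s(2s+2)}{\gamma^3(s+2)^2},\qquad -\frac{2s(s+1)(2s+2)\cdot3}{\gamma^4}\le\frac{D_1^4G}{G}\le\frac{2s(2s+1)(2s+2)(2s+3)}{\gamma^4},$$ where $G$ and its derivatives are evaluated at $(u,v;s)$.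
   Context: In particular $P_2=2s(2s+1)u^2-2sv^2$, $P_3=-2s(2s+1)(2s+2)u^3+3(2s)(2s+2)uv^2$, $P_4=(2s)(2s+2)[(2s+1)(2s+3)u^4-6(2s+3)u^2v^2+3v^4]$. *)

From Stdlib Require Import Reals.
From Coquelicot Require Import Coquelicot.
Open Scope R_scope.

Definition G (s u v : R) : R := Rpower (u ^ 2 + v ^ 2) (- s).

Definition D1G (j : nat) (s u v : R) : R :=
  Derive_n (fun x => G s x v) j u.

(* Pseq n = P_{n+1}: P_1 = -2 s u,
   P_{j+1} = (u^2+v^2) d/du P_j - 2 (s+j) u P_j *)
Fixpoint Pseq (n : nat) (s u v : R) : R :=
  match n with
  | O => - 2 * s * u
  | S m => (u ^ 2 + v ^ 2) * Derive (fun x => Pseq m s x v) u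
           - 2 * (s + INR (S m)) * u * Pseq m s u v
  end.

Definition P (j : nat) (s u v : R) : R := Pseq (j - 1) s u v.

(* Since D1 G = -2 s u G / (u^2+v^2), differentiating G P_j / (u^2+v^2)^j gives
   G ((u^2+v^2) P_j' - 2 (s+j) u P_j) / (u^2+v^2)^(j+1), which is exactly the recursion defining
   P_(j+1); as P_j is a polynomial in u, induction on j yields the formula for D1^j G / G.
   For the estimates put y = u^2/(u^2+v^2) in (0,1]: then P_j / (u^2+v^2)^j = u^(-j) phi_j(y) for
   an explicit polynomial phi_j, whose range on [0,1] lies between a nonpositive and a
   nonnegative bound; multiplying by 0 < u^(-j) <= gamma^(-j) gives the claimed inequalities. *)

From Stdlib Require Import Reals Lra Lia List.
From Coquelicot Require Import Coquelicot.
Open Scope R_scope.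
Import ListNotations.

Fixpoint horner (l : list R) (x : R) : R :=
  match l with nil => 0 | a :: l' => a + x * horner l' x end.

Fixpoint ladd (l1 l2 : list R) : list R :=
  match l1, l2 with
  | nil, _ => l2
  | _, nil => l1
  | a :: l1', b :: l2' => (a + b) :: ladd l1' l2'
  end.

Definition lscale (c : R) (l : list R) : list R := map (Rmult c) l.

Fixpoint lderiv (l : list R) : list R :=
  match l with nil => nil | _ :: l' => ladd l' (0 :: lderiv l') end.

Lemma horner_ladd l1 l2 x : horner (ladd l1 l2) x = horner l1 x + horner l2 x.
Proof.
revert l2; induction l1 as [|a l1 IH]; intros [|b l2]; simpl; try ring.
rewrite IH; ring.
Qed.

Lemma horner_lscale c l x : horner (lscale c l) x = c * horner l x.
Proof. induction l as [|a l IH]; simpl; [ring|]. rewrite IH; ring. Qed.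

Lemma is_derive_horner l x : is_derive (horner l) x (horner (lderiv l) x).
Proof.
induction l as [|a l IH]; simpl.
- apply (is_derive_const 0).
- rewrite horner_ladd; simpl.
  assert (Hl : ex_derive (horner l) x) by (eexists; exact IH).
  auto_derive; [exact Hl|].
  rewrite (Derive_ext (fun y => horner l y) (horner l) x (fun _ => eq_refl)).
  rewrite (is_derive_unique _ _ _ IH); ring.
Qed.

(* Coefficients of [Pseq n s . v], constant term first; the factor [u^2 + v^2] in front of the
   derivative is split as [v^2 * _] plus a shift by two degrees. *)
Fixpoint Pcoef (s v : R) (n : nat) : list R :=
  match n with
  | O => [0; -2 * s]
  | S m => ladd (ladd (lscale (v ^ 2) (lderiv (Pcoef s v m))) (0 :: 0 :: lderiv (Pcoef s v m)))
                (lscale (-2 * (s + INR (S m))) (0 :: Pcoef s v m))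
  end.

Lemma Pseq_horner n s v x : Pseq n s x v = horner (Pcoef s v n) x.
Proof.
revert x; induction n as [|m IH]; intros x; [simpl; ring|].
change (Pseq (S m) s x v) with ((x ^ 2 + v ^ 2) * Derive (fun y => Pseq m s y v) x
         - 2 * (s + INR (S m)) * x * Pseq m s x v).
rewrite (Derive_ext _ _ x IH), (is_derive_unique _ _ _ (is_derive_horner _ x)), IH.
cbn [Pcoef]; rewrite !horner_ladd, !horner_lscale; simpl; ring.
Qed.

Lemma ex_derive_Pseq n s v x : ex_derive (fun y => Pseq n s y v) x.
Proof.
eexists; apply (is_derive_ext (horner (Pcoef s v n))); [|apply is_derive_horner].
intros y; symmetry; apply Pseq_horner.
Qed.

Definition D1G_formula (n : nat) (s u v : R) : R :=
  G s u v * Pseq n s u v / (u ^ 2 + v ^ 2) ^ S n.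

Lemma is_derive_G s u v : 0 < u ^ 2 + v ^ 2 ->
  is_derive (fun x => G s x v) u (D1G_formula 0 s u v).
Proof.
intros Hr; unfold D1G_formula, G, Rpower; simpl in *.
auto_derive; [lra|]. field; lra.
Qed.

Lemma is_derive_D1G_formula n s u v : 0 < u ^ 2 + v ^ 2 ->
  is_derive (fun x => D1G_formula n s x v) u (D1G_formula (S n) s u v).
Proof.
intros Hr.
assert (HP := ex_derive_Pseq n s v u).
assert (Hrn : (u ^ 2 + v ^ 2) ^ n <> 0) by (apply pow_nonzero; lra).
unfold D1G_formula, G, Rpower.
auto_derive; replace (u * (u * 1) + v * (v * 1)) with (u ^ 2 + v ^ 2) by ring.
- repeat split; [lra | exact HP | apply Rmult_integral_contrapositive; split; lra].
- change (match n with O => 1 | S _ => INR n + 1 end) with (INR (S n)).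
  change (Pseq (S n) s u v) with ((u ^ 2 + v ^ 2) * Derive (fun y => Pseq n s y v) u
         - 2 * (s + INR (S n)) * u * Pseq n s u v).
  set (r := u ^ 2 + v ^ 2) in *.
  rewrite <- !tech_pow_Rmult; field; split; [exact Hrn | lra].
Qed.

Lemma D1G_eq_formula n s u v : 0 < u -> D1G (S n) s u v = D1G_formula n s u v.
Proof.
revert u; induction n as [|n IH]; intros u Hu.
- apply is_derive_unique, is_derive_G; nra.
- change (Derive (Derive_n (fun x => G s x v) (S n)) u = D1G_formula (S n) s u v).
  rewrite (Derive_ext_loc _ (fun x => D1G_formula n s x v)).
  + apply is_derive_unique, is_derive_D1G_formula; nra.
  + apply (filter_imp (fun x => 0 < x)); [exact IH | exact (open_gt 0 u Hu)].
Qed.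

Lemma G_pos s u v : 0 < G s u v.
Proof. apply exp_pos. Qed.

Lemma D1G_div_G j s u v : (1 <= j)%nat -> 0 < u ->
  D1G j s u v / G s u v = P j s u v / (u ^ 2 + v ^ 2) ^ j.
Proof.
intros Hj Hu; destruct j as [|n]; [lia|].
unfold P; simpl (S n - 1)%nat; rewrite Nat.sub_0_r, D1G_eq_formula by exact Hu.
unfold D1G_formula; field; split; [apply pow_nonzero; nra | apply Rgt_not_eq, G_pos].
Qed.

Lemma P1_explicit s u v : P 1 s u v = - 2 * s * u.
Proof. reflexivity. Qed.

Lemma P2_explicit s u v : P 2 s u v = 2 * s * (2 * s + 1) * u ^ 2 - 2 * s * v ^ 2.
Proof. unfold P; rewrite Pseq_horner; simpl; ring. Qed.

Lemma P3_explicit s u v :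
  P 3 s u v = - 2 * s * (2 * s + 1) * (2 * s + 2) * u ^ 3 + 3 * (2 * s) * (2 * s + 2) * u * v ^ 2.
Proof. unfold P; rewrite Pseq_horner; simpl; ring. Qed.

Lemma P4_explicit s u v : P 4 s u v =
  2 * s * (2 * s + 2) * ((2 * s + 1) * (2 * s + 3) * u ^ 4 - 6 * (2 * s + 3) * u ^ 2 * v ^ 2 + 3 * v ^ 4).
Proof. unfold P; rewrite Pseq_horner; simpl; ring. Qed.
Lemma quadratic_bounds s y : 0 <= s -> 0 <= y <= 1 ->
  - (s / (4 * (s + 1))) <= 4 * s * (s + 1) * y ^ 2 - 2 * s * y <= 2 * s * (2 * s + 1).
Proof.
intros Hs Hy; split.
- assert (Hsq : 0 <= s * (4 * (s + 1) * y - 1) ^ 2 / (4 * (s + 1))).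
  { apply Rmult_le_pos; [apply Rmult_le_pos; [lra | apply pow2_ge_0] | apply Rlt_le, Rinv_0_lt_compat; lra]. }
  enough (E : 4 * s * (s + 1) * y ^ 2 - 2 * s * y + s / (4 * (s + 1))
              = s * (4 * (s + 1) * y - 1) ^ 2 / (4 * (s + 1))) by lra.
  field; lra.
- assert (0 <= s * (1 - y) * (2 * (s + 1) * (1 + y) - 1)) by (apply Rmult_le_pos; nra).
  nra.
Qed.

Lemma cubic_bounds s y : 0 <= s -> 0 <= y <= 1 ->
  - (2 * s + 1) <= 3 * y ^ 2 - (2 * s + 4) * y ^ 3 <= 1 / (s + 2) ^ 2.
Proof.
intros Hs Hy; split.
- assert (y ^ 3 <= y ^ 2 <= 1) by (simpl; split; nra). nra.
- (* with t = (s+2) y this is t^2 (3 - 2 t) <= 1, i.e. (t-1)^2 (2t+1) >= 0 *)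
  set (t := (s + 2) * y).
  assert (0 <= (t - 1) ^ 2 * (2 * t + 1)) by (apply Rmult_le_pos; [apply pow2_ge_0 | unfold t; nra]).
  replace (3 * y ^ 2 - (2 * s + 4) * y ^ 3) with (t ^ 2 * (3 - 2 * t) / (s + 2) ^ 2)
    by (unfold t; field; lra).
  apply Rmult_le_compat_r; [apply Rlt_le, Rinv_0_lt_compat; nra | nra].
Qed.

Lemma quartic_bounds s y : 0 <= s -> 0 <= y <= 1 ->
  - (3 * (s + 1)) <= 4 * (s + 2) * (s + 3) * y ^ 4 - 12 * (s + 2) * y ^ 3 + 3 * y ^ 2
    <= (2 * s + 1) * (2 * s + 3).
Proof.
intros Hs Hy.
set (w := 4 * (s + 2) * (s + 3) * y ^ 2 - 12 * (s + 2) * y + 3).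
replace (4 * (s + 2) * (s + 3) * y ^ 4 - 12 * (s + 2) * y ^ 3 + 3 * y ^ 2) with (y ^ 2 * w)
  by (unfold w; ring).
assert (Hy2 : 0 <= y ^ 2 <= 1) by (simpl; split; nra).
assert (Hw_lo : - (3 * (s + 1)) <= w).
{ assert (0 <= (s + 2) * (2 * (s + 3) * y - 3) ^ 2) by (apply Rmult_le_pos; [lra | apply pow2_ge_0]).
  assert (E : (s + 3) * w + (6 * s + 9) = (s + 2) * (2 * (s + 3) * y - 3) ^ 2) by (unfold w; ring).
  nra. }
assert (Hw_hi : w <= (2 * s + 1) * (2 * s + 3)).
{ assert (0 <= 4 * (s + 2) * (1 - y) * ((s + 3) * (y + 1) - 3)) by (apply Rmult_le_pos; nra).
  unfold w; nra. }
split; destruct (Rle_lt_dec 0 w); nra.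
Qed.

Lemma div_pow_bounds gamma u q lo hi (k : nat) :
  0 < gamma -> gamma <= u -> lo <= q <= hi -> lo <= 0 <= hi ->
  lo / gamma ^ k <= q / u ^ k <= hi / gamma ^ k.
Proof.
intros Hg Hu Hq Hsign.
assert (Hgk : 0 < gamma ^ k) by (apply pow_lt; lra).
assert (Hinv : 0 < / u ^ k <= / gamma ^ k)
  by (split; [apply Rinv_0_lt_compat, pow_lt; lra | apply Rinv_le_contravar, pow_incr; lra]).
unfold Rdiv; split; nra.
Qed.

Section Estimates.

Variables gamma s u v : R.
Hypotheses (hgamma : 0 < gamma) (hs : 0 < s) (hu : gamma <= u).

(* Each ratio [P_j / (u^2+v^2)^j] is [u^(-j)] times a polynomial in [y]. *)
Let y := u ^ 2 / (u ^ 2 + v ^ 2).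

Let y_range : 0 <= y <= 1.
Proof.
assert (Hr : 0 < u ^ 2 + v ^ 2) by nra.
unfold y; split; [apply Rmult_le_pos; [nra | apply Rlt_le, Rinv_0_lt_compat; lra]|].
apply Rmult_le_reg_r with (u ^ 2 + v ^ 2); [lra|].
unfold Rdiv; rewrite Rmult_assoc, Rinv_l; nra.
Qed.

Let r_neq0 : u ^ 2 + v ^ 2 <> 0.
Proof. nra. Qed.

Lemma D1G1_bounds : - (2 * s / gamma) <= D1G 1 s u v / G s u v < 0.
Proof.
rewrite D1G_div_G, P1_explicit by (lia || lra).
replace (- 2 * s * u / (u ^ 2 + v ^ 2) ^ 1) with (- 2 * s * y / u ^ 1) by (unfold y; field; lra).
split.
- replace (- (2 * s / gamma)) with (- 2 * s / gamma ^ 1) by (field; lra).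
  apply div_pow_bounds with (hi := 0); nra.
- assert (0 < s * y) by (apply Rmult_lt_0_compat; [lra | apply Rdiv_lt_0_compat; nra]).
  assert (0 < / u ^ 1) by (simpl; apply Rinv_0_lt_compat; lra).
  unfold Rdiv; nra.
Qed.

Lemma D1G2_bounds : - (s / (4 * gamma ^ 2 * (s + 1))) <= D1G 2 s u v / G s u v
                    <= 2 * s * (2 * s + 1) / gamma ^ 2.
Proof.
rewrite D1G_div_G, P2_explicit by (lia || lra).
replace (_ / (u ^ 2 + v ^ 2) ^ 2) with ((4 * s * (s + 1) * y ^ 2 - 2 * s * y) / u ^ 2)
  by (unfold y; field; lra).
replace (- (s / (4 * gamma ^ 2 * (s + 1)))) with (- (s / (4 * (s + 1))) / gamma ^ 2)
  by (field; lra).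
apply div_pow_bounds; [lra | lra | apply quadratic_bounds; lra |].
split; [|nra]. enough (0 <= s / (4 * (s + 1))) by lra.
apply Rmult_le_pos; [lra | apply Rlt_le, Rinv_0_lt_compat; lra].
Qed.

Lemma D1G3_bounds : - (2 * s * (2 * s + 1) * (2 * s + 2) / gamma ^ 3) <= D1G 3 s u v / G s u v
                    <= 2 * s * (2 * s + 2) / (gamma ^ 3 * (s + 2) ^ 2).
Proof.
rewrite D1G_div_G, P3_explicit by (lia || lra).
replace (_ / (u ^ 2 + v ^ 2) ^ 3)
  with (2 * s * (2 * s + 2) * (3 * y ^ 2 - (2 * s + 4) * y ^ 3) / u ^ 3)
  by (unfold y; field; lra).
replace (- (2 * s * (2 * s + 1) * (2 * s + 2) / gamma ^ 3))
  with (2 * s * (2 * s + 2) * - (2 * s + 1) / gamma ^ 3) by (field; lra).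
replace (2 * s * (2 * s + 2) / (gamma ^ 3 * (s + 2) ^ 2))
  with (2 * s * (2 * s + 2) * (1 / (s + 2) ^ 2) / gamma ^ 3) by (field; lra).
assert (Hc : 0 < 2 * s * (2 * s + 2)) by nra.
assert (0 < 1 / (s + 2) ^ 2) by (apply Rdiv_lt_0_compat; nra).
apply div_pow_bounds; [lra | lra | | nra].
destruct (cubic_bounds s y) as [Hlo Hhi]; [lra | exact y_range |].
split; apply Rmult_le_compat_l; lra.
Qed.

Lemma D1G4_bounds : - (2 * s * (s + 1) * (2 * s + 2) * 3 / gamma ^ 4) <= D1G 4 s u v / G s u v
                    <= 2 * s * (2 * s + 1) * (2 * s + 2) * (2 * s + 3) / gamma ^ 4.
Proof.
rewrite D1G_div_G, P4_explicit by (lia || lra).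
replace (_ / (u ^ 2 + v ^ 2) ^ 4)
  with (2 * s * (2 * s + 2) * (4 * (s + 2) * (s + 3) * y ^ 4 - 12 * (s + 2) * y ^ 3 + 3 * y ^ 2)
        / u ^ 4) by (unfold y; field; lra).
replace (- (2 * s * (s + 1) * (2 * s + 2) * 3 / gamma ^ 4))
  with (2 * s * (2 * s + 2) * - (3 * (s + 1)) / gamma ^ 4) by (field; lra).
replace (2 * s * (2 * s + 1) * (2 * s + 2) * (2 * s + 3) / gamma ^ 4)
  with (2 * s * (2 * s + 2) * ((2 * s + 1) * (2 * s + 3)) / gamma ^ 4) by (field; lra).
assert (Hc : 0 < 2 * s * (2 * s + 2)) by nra.
apply div_pow_bounds; [lra | lra | | nra].
destruct (quartic_bounds s y) as [Hlo Hhi]; [lra | exact y_range |].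
split; apply Rmult_le_compat_l; lra.
Qed.

End Estimates.

Theorem lemma7p7 (gamma s : R) (hgamma : 0 < gamma) (hs : 0 < s) :
  (forall (j : nat) (u v : R), (1 <= j)%nat -> gamma <= u ->
     D1G j s u v / G s u v = P j s u v / (u ^ 2 + v ^ 2) ^ j) /\
  (forall u v : R, gamma <= u ->
     (- (2 * s / gamma) <= D1G 1 s u v / G s u v /\
      D1G 1 s u v / G s u v < 0) /\
     (- (s / (4 * gamma ^ 2 * (s + 1))) <= D1G 2 s u v / G s u v /\
      D1G 2 s u v / G s u v <= 2 * s * (2 * s + 1) / gamma ^ 2) /\
     (- (2 * s * (2 * s + 1) * (2 * s + 2) / gamma ^ 3) <= D1G 3 s u v / G s u v /\
      D1G 3 s u v / G s u v <= 2 * s * (2 * s + 2) / (gamma ^ 3 * (s + 2) ^ 2)) /\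
     (- (2 * s * (s + 1) * (2 * s + 2) * 3 / gamma ^ 4) <= D1G 4 s u v / G s u v /\
      D1G 4 s u v / G s u v <= 2 * s * (2 * s + 1) * (2 * s + 2) * (2 * s + 3) / gamma ^ 4)).
Proof.
split.
- intros j u v Hj Hu; apply D1G_div_G; [exact Hj | lra].
- intros u v Hu.
  split; [|split; [|split]];
    [ apply D1G1_bounds | apply D1G2_bounds | apply D1G3_bounds | apply D1G4_bounds ];
    assumption.
Qed.
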